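(* For every nonzero integer $n$, $B_n<0.65\log|n|+2.24$. That is, if $S$ is any set of positive integers with the property $D(n)$, then the number of elements $x\in S$ with $n^2<x<|n|^3$ is less than $0.65\log|n|+2.24$.
   Context: Let $n$ be a nonzero integer. A set of positive integers $S$ has the property $D(n)$ if $xy+n$ is a perfect square for all distinct $x,y\in S$. Define $B_n=\sup\{|S\cap(n^2,|n|^3)| : S \text{ has the property } D(n)\}$. Here $\log$ is the natural logarithm. *)

From Stdlib Require Import ZArith Reals List.
Open Scope Z_scope.

Definition is_square (x : Z) : Prop := exists k : Z, x = k * k.

Definition has_property_D (n : Z) (S : Z -> Prop) : Prop :=
  (forall x, S x -> 0 < x) /\
  (forall x y, S x -> S y -> x <> y -> is_square (x * y + n)).

(* For a D(n)-triple n^2 < a < c < d with r^2 = ac + n, s^2 = ad + n, t^2 = cd + n,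
   put e = n(a+c+d) + 2acd - 2rst.  The identities ae + n^2 = (at - rs)^2 and
   n^2((d-a-c)^2 - 4r^2) = e(e + 4rst) give e >= 0 and d >= a + c + 2r, with equality
   when e = 0, while e >= 1 forces d > 5c.  For fixed c < d equality holds for at most
   one a, so if x1 < x2 < ... < xm lie in a D(n)-set inside (n^2, |n|^3), then
   x3 > 4n^2 and x_(k+1) > 5 x_k for k >= 3.  Hence 4 n^2 5^(m-3) < |n|^3, i.e.
   m < 3 + log_5 (|n|/4) < 0.65 log|n| + 2.24. *)

From Stdlib Require Import ZArith Reals List.
From Stdlib Require Import Lia Psatz Lra Sorted Mergesort Orders Permutation.

Open Scope Z_scope.

(* Dujella's e, for which a e + n^2, c e + n^2 and d e + n^2 are all perfect squares. *)
Definition triple_e (n a c d r s t : Z) : Z := n*(a+c+d) + 2*a*c*d - 2*(r*s*t).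

Section DiophantineTriple.

Variables n a c d r s t : Z.
Hypotheses (Hr : r*r = a*c + n) (Hs : s*s = a*d + n) (Ht : t*t = c*d + n).

Local Notation e := (triple_e n a c d r s t).

Lemma triple_e_square : a*e + n*n = (a*t - r*s) * (a*t - r*s).
Proof.
assert (E : (a*t - r*s) * (a*t - r*s) = a*a*(t*t) - 2*a*(r*s*t) + (r*r)*(s*s)) by ring.
rewrite E, Hr, Hs, Ht; unfold triple_e; ring.
Qed.

Lemma triple_e_factor :
  n*n * ((d-a-c)*(d-a-c) - 4*(r*r)) = e * (e + 4*(r*s*t)).
Proof.
assert (E : e * (e + 4*(r*s*t)) =
            (n*(a+c+d) + 2*a*c*d) * (n*(a+c+d) + 2*a*c*d) - 4*((r*r)*(s*s)*(t*t)))
  by (unfold triple_e; ring).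
rewrite E, Hr, Hs, Ht; ring.
Qed.

Hypotheses (Hn : n <> 0) (Ha : n*n < a) (Hac : a < c) (Hcd : c < d).
Hypotheses (Hr0 : 0 <= r) (Hs0 : 0 <= s) (Ht0 : 0 <= t).

Lemma triple_e_nonneg : 0 <= e.
Proof.
pose proof triple_e_square; pose proof (Z.square_nonneg (a*t - r*s)).
pose proof (Z.square_nonneg n); nia.
Qed.

Lemma triple_gap : 2*r <= d - a - c.
Proof.
assert (Hrst : 0 <= r*s*t) by (apply Z.mul_nonneg_nonneg; [apply Z.mul_nonneg_nonneg|]; lia).
assert (Hsq : 4*(r*r) <= (d-a-c)*(d-a-c)).
{ pose proof triple_e_factor; pose proof triple_e_nonneg.
  assert (Hn2 : 0 < n*n) by nia.
  assert (0 <= e * (e + 4*(r*s*t))) by nia.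
  nia. }
assert (Hnn : 0 <= d - a - c).
{ destruct (Z_lt_le_dec (d-a-c) 0) as [Hneg|]; [exfalso|lia].
  assert (2*r <= a + c - d) by (apply Z.square_le_simpl_nonneg; nia).
  assert (Habs : -n <= n*n) by nia.
  nia. }
apply Z.square_le_simpl_nonneg; nia.
Qed.

Lemma triple_rst_lower : (n*n*c) * (n*n*d) * (c*(d-1)) <= (r*s*t) * (r*s*t).
Proof.
replace ((r*s*t) * (r*s*t)) with ((r*r) * (s*s) * (t*t)) by ring.
rewrite Hr, Hs, Ht.
assert (Habs : -n <= n*n) by (clear -Hn; nia).
assert (F1 : n*n*c <= a*c + n) by (clear -Habs Ha Hac; nia).
assert (F2 : n*n*d <= a*d + n) by (clear -Habs Ha Hac Hcd; nia).
assert (F3 : c*(d-1) <= c*d + n) by (clear -Habs Ha Hac Hcd; nia).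
assert (0 <= n*n) by apply Z.square_nonneg.
apply Z.mul_le_mono_nonneg; [| | nia | exact F3].
- apply Z.mul_nonneg_nonneg; nia.
- apply Z.mul_le_mono_nonneg; nia.
Qed.

Lemma triple_far : 1 <= e -> 5*c < d.
Proof.
intros He.
assert (Hrst : 0 <= r*s*t) by (apply Z.mul_nonneg_nonneg; [apply Z.mul_nonneg_nonneg|]; lia).
assert (Hlt : 4*(r*s*t) < n*n * ((d-a-c)*(d-a-c))).
{ pose proof triple_e_factor as F.
  assert (0 <= n*n*(r*r)) by (apply Z.mul_nonneg_nonneg; apply Z.square_nonneg).
  assert (1 + 4*(r*s*t) <= e * (e + 4*(r*s*t))) by (clear -He Hrst; nia).
  lia. }
pose proof triple_gap as Hgap; pose proof triple_rst_lower as Hlow.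
(* If d <= 5c, then with X = d - c we get X^4 <= 16 c^2 d(d-1), hence
   (n^2 X^2)^2 <= 16 (rst)^2 < (n^2 X^2)^2. *)
destruct (Z_lt_le_dec (5*c) d) as [|Hle]; [assumption | exfalso].
set (X := d - c) in *.
assert (Hn2 : 0 <= n*n) by apply Z.square_nonneg.
assert (HX : 4*(r*s*t) < n*n * (X*X)).
{ assert (HdX : (d-a-c)*(d-a-c) <= X*X) by (clear -Hgap Hr0 Ha Hcd; unfold X; nia).
  clear -Hlt HdX Hn2; nia. }
assert (HX2 : (X*X) * (X*X) <= (16*(c*c)) * (d*(d-1)))
  by (apply Z.mul_le_mono_nonneg; unfold X; clear -Ha Hac Hcd Hle Hn2; nia).
assert (H16 : (n*n*(X*X)) * (n*n*(X*X)) <= 16 * ((n*n*c) * (n*n*d) * (c*(d-1)))).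
{ replace ((n*n*(X*X)) * (n*n*(X*X))) with ((n*n*(n*n)) * ((X*X)*(X*X))) by ring.
  replace (16 * ((n*n*c) * (n*n*d) * (c*(d-1)))) with ((n*n*(n*n)) * ((16*(c*c))*(d*(d-1)))) by ring.
  apply Z.mul_le_mono_nonneg_l; [apply Z.mul_nonneg_nonneg; apply Z.square_nonneg | exact HX2]. }
assert ((4*(r*s*t)) * (4*(r*s*t)) < (n*n*(X*X)) * (n*n*(X*X))) by (apply Z.mul_lt_mono_nonneg; lia).
lia.
Qed.

Lemma triple_regular_or_far : d = a + c + 2*r \/ 5*c < d.
Proof.
destruct (Z.eq_dec e 0) as [E0 | E1]; [left | right; apply triple_far; pose proof triple_e_nonneg; lia].
pose proof triple_e_factor as F; rewrite E0, Z.mul_0_l in F.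
assert (Hsq : (d-a-c)*(d-a-c) = (2*r)*(2*r)) by nia.
pose proof triple_gap.
assert (d - a - c = 2*r) by (apply Z.le_antisymm; apply Z.square_le_simpl_nonneg; lia).
lia.
Qed.

End DiophantineTriple.

Module ZOrder <: TotalLeBool.
  Definition t := Z.
  Definition leb := Z.leb.
  Theorem leb_total : forall x y, leb x y = true \/ leb y x = true.
  Proof. intros x y; unfold leb; rewrite !Z.leb_le; lia. Qed.
End ZOrder.

Module ZSort := Sort ZOrder.

Lemma NoDup_sorted_permutation (l : list Z) :
  NoDup l -> exists s, Permutation l s /\ StronglySorted Z.lt s.
Proof.
intros Hl; exists (ZSort.sort l); split; [apply ZSort.Permuted_sort |].
assert (Hle : StronglySorted (fun x y => is_true (ZOrder.leb x y)) (ZSort.sort l)).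
{ apply ZSort.StronglySorted_sort; intros x y z; unfold is_true, ZOrder.leb.
  rewrite !Z.leb_le; lia. }
pose proof (Permutation_NoDup (ZSort.Permuted_sort l) Hl) as Hnd.
clear Hl; induction (ZSort.sort l) as [| x s IH]; constructor;
  apply StronglySorted_inv in Hle as [Hle Hx]; inversion Hnd as [| ? ? Hxs Hnds].
- exact (IH Hle Hnds).
- rewrite Forall_forall in *; intros y Hy.
  assert (x <> y) by (intros ->; contradiction).
  specialize (Hx y Hy); unfold is_true, ZOrder.leb in Hx; rewrite Z.leb_le in Hx; lia.
Qed.

Lemma StronglySorted_geometric_growth (q c : Z) (L : list Z) : 0 <= q ->
  StronglySorted Z.lt (c :: L) ->
  (forall x y, In x (c :: L) -> In y (c :: L) -> x < y -> q*x <= y) ->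
  exists z, In z (c :: L) /\ c * q ^ Z.of_nat (length L) <= z.
Proof.
intros Hq; revert c; induction L as [| d L IH]; intros c Hs Hgrow.
- exists c; split; [now left | simpl; lia].
- apply StronglySorted_inv in Hs as [Hs Hc]; inversion Hc as [| ? ? Hcd _]; subst.
  destruct (IH d Hs (fun x y Hx Hy => Hgrow x y (or_intror Hx) (or_intror Hy)))
    as [z [Hz Hdz]].
  exists z; split; [now right |].
  assert (Hqc : q*c <= d) by (apply Hgrow; simpl; auto).
  assert (0 <= q ^ Z.of_nat (length L)) by (apply Z.pow_nonneg; exact Hq).
  simpl length; rewrite Nat2Z.inj_succ, Z.pow_succ_r by lia; nia.
Qed.

Section PropertyD.

Variables (n : Z) (S : Z -> Prop).
Hypotheses (Hn : n <> 0) (HD : has_property_D n S).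

Lemma property_D_root x y : S x -> S y -> x <> y -> exists r, 0 <= r /\ r*r = x*y + n.
Proof.
intros Sx Sy Hxy; destruct (proj2 HD x y Sx Sy Hxy) as [k Hk].
exists (Z.abs k); split; [lia | rewrite Hk; nia].
Qed.

Lemma property_D_third_gt a b c : S a -> S b -> S c ->
  n*n < a -> a < b -> b < c -> 4*(n*n) < c.
Proof.
intros Sa Sb Sc Ha Hab Hbc.
destruct (property_D_root a b Sa Sb ltac:(lia)) as [r [Hr Er]].
destruct (property_D_root a c Sa Sc ltac:(lia)) as [s [Hs Es]].
destruct (property_D_root b c Sb Sc ltac:(lia)) as [t [Ht Et]].
pose proof (triple_gap n a b c r s t Er Es Et Hn Ha Hab Hbc Hr Hs Ht).
assert (n*n < r).
{ apply Z.square_lt_simpl_nonneg; [lia |].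
  assert (Habs : -n <= n*n) by (clear -Hn; nia).
  assert (Hn2 : 0 <= n*n) by apply Z.square_nonneg.
  rewrite Er; clear -Ha Hab Habs Hn2; nia. }
lia.
Qed.

(* {a, c, d} and {b, c, d} cannot both be regular: d = x + c + 2 sqrt(xc + n)
   is strictly increasing in x. *)
Lemma property_D_quadruple_gap a b c d : S a -> S b -> S c -> S d ->
  n*n < a -> a < b -> b < c -> c < d -> 5*c < d.
Proof.
intros Sa Sb Sc Sd Ha Hab Hbc Hcd.
destruct (property_D_root a c Sa Sc ltac:(lia)) as [r1 [Hr1 Er1]].
destruct (property_D_root a d Sa Sd ltac:(lia)) as [s1 [Hs1 Es1]].
destruct (property_D_root b c Sb Sc ltac:(lia)) as [r2 [Hr2 Er2]].
destruct (property_D_root b d Sb Sd ltac:(lia)) as [s2 [Hs2 Es2]].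
destruct (property_D_root c d Sc Sd ltac:(lia)) as [t [Ht Et]].
destruct (triple_regular_or_far n a c d r1 s1 t Er1 Es1 Et Hn Ha ltac:(lia) Hcd Hr1 Hs1 Ht)
  as [E1 | ?]; [| assumption].
destruct (triple_regular_or_far n b c d r2 s2 t Er2 Es2 Et Hn ltac:(lia) Hbc Hcd Hr2 Hs2 Ht)
  as [E2 | ?]; [| assumption].
assert (r1 < r2); [| lia].
apply Z.square_lt_simpl_nonneg; [lia |].
rewrite Er1, Er2; apply Z.add_lt_mono_r, Z.mul_lt_mono_pos_r; lia.
Qed.

Lemma property_D_sorted_growth a b c L :
  StronglySorted Z.lt (a :: b :: c :: L) -> (forall x, In x (a :: b :: c :: L) -> S x) ->
  n*n < a -> exists z, In z (c :: L) /\ 4*(n*n) * 5 ^ Z.of_nat (length L) < z.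
Proof.
intros Hs HS Ha.
apply StronglySorted_inv in Hs as [Hs Ha_lt]; apply StronglySorted_inv in Hs as [Hs Hb_lt].
rewrite Forall_forall in Ha_lt, Hb_lt.
assert (Hab : a < b) by (apply Ha_lt; now left).
assert (Hbc : b < c) by (apply Hb_lt; now left).
assert (Hc : 4*(n*n) < c)
  by (apply (property_D_third_gt a b c); [apply HS; simpl; auto .. | exact Ha | exact Hab | exact Hbc]).
destruct (StronglySorted_geometric_growth 5 c L ltac:(lia) Hs) as [z [Hz Hcz]].
{ intros x y Hx Hy Hxy; apply Z.lt_le_incl.
  apply (property_D_quadruple_gap a b x y);
    [apply HS; simpl; auto .. | exact Ha | exact Hab | apply Hb_lt, Hx | exact Hxy]. }
exists z; split; [exact Hz |].
assert (0 < 5 ^ Z.of_nat (length L)) by (apply Z.pow_pos_nonneg; lia).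
nia.
Qed.

End PropertyD.

Open Scope R_scope.

Lemma ln_20_19_ge : 1/20 <= ln (20/19).
Proof.
assert (Hexp : exp (1/20) <= 20/19).
{ pose proof (exp_ineq1_le (-(1/20))); pose proof (exp_pos (1/20)).
  assert (exp (1/20) * exp (-(1/20)) = 1)
    by (rewrite <- exp_plus, Rplus_opp_r; apply exp_0).
  nra. }
rewrite <- (ln_exp (1/20)).
destruct Hexp as [Hlt | ->]; [| right; reflexivity].
left; apply ln_increasing; [apply exp_pos | exact Hlt].
Qed.

Lemma ln_gt_of_pow_20_19 (m : nat) (x : R) : (20/19)^m < x -> INR m / 20 < ln x.
Proof.
intros Hx.
assert (Hpos : 0 < (20/19)^m) by (apply pow_lt; lra).
apply (Rle_lt_trans _ (ln ((20/19)^m))); [| now apply ln_increasing].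
rewrite ln_pow by lra.
pose proof ln_20_19_ge; pose proof (pos_INR m); nra.
Qed.

Lemma ln_IZR_nonneg (N : Z) : (1 <= N)%Z -> 0 <= ln (IZR N).
Proof.
intros HN; rewrite <- ln_1.
destruct (Z.eq_dec N 1) as [-> | HN1]; [right; reflexivity |].
left; apply ln_increasing; [lra | apply IZR_lt; lia].
Qed.

(* The constants work because 0.65 ln 5 > 1 and 0.65 ln 4 + 2.24 > 3. *)
Lemma card_bound_of_pow5 (k : nat) (N : Z) :
  (4 * 5 ^ Z.of_nat k < N)%Z -> INR (3 + k) < 0.65 * ln (IZR N) + 2.24.
Proof.
intros H.
assert (HN : 4 * 5 ^ k < IZR N)
  by (apply IZR_lt in H; rewrite mult_IZR, <- pow_IZR in H; exact H).
assert (H5k : 0 < 5 ^ k) by (apply pow_lt; lra).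
apply ln_increasing in HN; [| lra].
rewrite ln_mult, ln_pow in HN by lra.
pose proof (ln_gt_of_pow_20_19 24 4 ltac:(simpl; lra)) as ln4.
pose proof (ln_gt_of_pow_20_19 31 5 ltac:(simpl; lra)) as ln5.
simpl INR in ln4, ln5.
pose proof (pos_INR k).
rewrite plus_INR; simpl (INR 3); nra.
Qed.

Close Scope R_scope.

Theorem theorem2 (n : Z) (S : Z -> Prop) :
  n <> 0%Z ->
  has_property_D n S ->
  forall l : list Z,
    NoDup l ->
    (forall x, In x l -> S x /\ (n * n < x)%Z /\ (x < Z.abs n ^ 3)%Z) ->
    (INR (length l) < 0.65 * ln (IZR (Z.abs n)) + 2.24)%R.
Proof.
intros Hn HD l Hnd Hl.
destruct (NoDup_sorted_permutation l Hnd) as [s [Hperm Hs]].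
rewrite (Permutation_length Hperm).
assert (Hin : forall x, In x s -> S x /\ n*n < x /\ x < Z.abs n ^ 3)
  by (intros x Hx; apply Hl, (Permutation_in x (Permutation_sym Hperm) Hx)).
pose proof (ln_IZR_nonneg (Z.abs n) ltac:(lia)).
destruct s as [| a [| b [| c L]]]; [simpl; lra .. |].
destruct (property_D_sorted_growth n S Hn HD a b c L Hs) as [z [Hz Hgrow]].
{ intros x Hx; apply Hin, Hx. }
{ apply Hin; now left. }
apply (card_bound_of_pow5 (length L)).
destruct (Hin z (or_intror (or_intror Hz))) as [_ [_ Hz3]].
replace (Z.abs n ^ 3) with (Z.abs n * (n*n)) in Hz3 by (rewrite <- Z.abs_square; ring).
apply (Z.mul_lt_mono_pos_r (n*n)); [rewrite <- Z.abs_square; apply Z.mul_pos_pos; lia | lia].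
Qed.
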